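(* Let $H_1$ and $H_2$ be two disjoint connected hypermaps and let $H_1\vee H_2$ be a join of them. Then \[ \partial_{\varepsilon_{H_1\vee H_2}}(z)=\partial_{\varepsilon_{H_1}}(z)\cdot\partial_{\varepsilon_{H_2}}(z). \]
   Context: A hypermap $H$ is a cellular embedding in a closed surface of the bipartite incidence graph of a hypergraph (vertex nodes $V(H)$, hyperedge nodes $E(H)$, $v\sim e$ iff $v\in e$); $v(H),e(H),f(H)$ count vertices, hyperedges, faces, $n_i=|e_i|$, $\chi(H)=v(H)+e(H)+f(H)-\sum_i n_i$, $c(H)$ the number of components, $\varepsilon(H)=2c(H)-\chi(H)$ the Euler genus. Combinatorially $H=(B,\tau,\psi)$ with label set $B$, cycles of $\tau$ (in pairs) encoding vertex rotations, cycles of $\psi$ encoding hyperedges, cycles of $\psi\circ\tau$ encoding faces. For $A\subseteq E(H)$ the partial dual is $H^A=(B,\psi|_A\circ\tau,\psi)$, where $\psi|_A$ equals $\psi$ on labels of hyperedges in $A$ and is the identity elsewhere. The partial-dual Euler-genus polynomial is $\partial_{\varepsilon_H}(z)=\sum_{A\subseteq E(H)}z^{\varepsilon(H^A)}$. Join: choose a vertex $v_1$ of $H_1$, a vertex $v_2$ of $H_2$ and a corner of $v_1$; $H_1\vee H_2$ identifies $v_1$ and $v_2$ into one vertex whose rotation is that of $v_1$ with the whole rotation of $v_2$ inserted at the chosen corner; all other rotations and all hyperedges are unchanged, so $E(H_1\vee H_2)=E(H_1)\cup E(H_2)$. *)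

(* Hypermaps in the standard flag ("tau-") model:
   three fixed-point-free involutions on a finite set of flags. *)
From mathcomp Require Import all_boot all_algebra.
Set Implicit Arguments. Unset Strict Implicit. Unset Printing Implicit Defensive.
Import GRing.Theory.

(* A flag is a triangle (vertex, hyperedge, face) of the subdivision of the
   surface; s0 changes the vertex, s1 the hyperedge, s2 the face. *)
Definition is_hypermap (T : finType) (s0 s1 s2 : T -> T) : Prop :=
  (forall x, s0 (s0 x) = x) /\ (forall x, s1 (s1 x) = x) /\
  (forall x, s2 (s2 x) = x) /\
  (forall x, s0 x != x) /\ (forall x, s1 x != x) /\ (forall x, s2 x != x).

Definition rel2 (T : finType) (f g : T -> T) : rel T :=
  fun x y => (y == f x) || (y == g x).
Definition rel3 (T : finType) (f g h : T -> T) : rel T :=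
  fun x y => [|| y == f x, y == g x | y == h x].

Definition classes (T : finType) (r : rel T) : {set {set T}} :=
  [set [set y | connect r x y] | x : T].
Definition ncls (T : finType) (r : rel T) : nat := #|classes r|.

Definition hedges (T : finType) (s0 s2 : T -> T) := classes (rel2 s0 s2).
Definition nverts (T : finType) (s1 s2 : T -> T) := ncls (rel2 s1 s2).
Definition nhedges (T : finType) (s0 s2 : T -> T) := ncls (rel2 s0 s2).
Definition nfaces (T : finType) (s0 s1 : T -> T) := ncls (rel2 s0 s1).
Definition ncomps (T : finType) (s0 s1 s2 : T -> T) := ncls (rel3 s0 s1 s2).

(* n_i = |e_i| = number of incidences of hyperedge e_i; its orbit has 2 n_i flags *)
Definition sum_deg (T : finType) (s0 s2 : T -> T) : nat :=
  \sum_(e in hedges s0 s2) (#|e| %/ 2).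

Definition euler_char (T : finType) (s0 s1 s2 : T -> T) : int :=
  ((nverts s1 s2 + nhedges s0 s2 + nfaces s0 s1)%:Z - (sum_deg s0 s2)%:Z)%R.

Definition euler_genus (T : finType) (s0 s1 s2 : T -> T) : int :=
  (2 * (ncomps s0 s1 s2)%:Z - euler_char s0 s1 s2)%R.

Definition connected_hm (T : finType) (s0 s1 s2 : T -> T) : Prop :=
  ncomps s0 s1 s2 = 1%N.

(* Partial dual w.r.t. the set S of flags of the hyperedges in A:
   on the flags of A-hyperedges the roles of s0 and s2 are exchanged
   (vertices and faces exchanged, hyperedges unchanged). *)
Definition pd0 (T : finType) (S : {set T}) (s0 s2 : T -> T) : T -> T :=
  fun x => if x \in S then s2 x else s0 x.
Definition pd2 (T : finType) (S : {set T}) (s0 s2 : T -> T) : T -> T :=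
  fun x => if x \in S then s0 x else s2 x.

Definition pdual_genus (T : finType) (s0 s1 s2 : T -> T)
    (A : {set {set T}}) : int :=
  let S := \bigcup_(e in A) e in
  euler_genus (pd0 S s0 s2) s1 (pd2 S s0 s2).

(* partial-dual Euler-genus polynomial (Euler genus is >= 0, so absz is the identity) *)
Definition pd_poly (T : finType) (s0 s1 s2 : T -> T) : {poly int} :=
  (\sum_(A in powerset (hedges s0 s2)) 'X^(absz (pdual_genus s0 s1 s2 A)))%R.

(* The flag x1 of H1 selects the vertex
   v1 and the corner {x1, s1 x1} of v1; the flag x2 of H2 selects the vertex
   v2 and where (and with which orientation) the rotation of v2 is cut open
   to be inserted into that corner. *)
Definition sum_map (T1 T2 : finType) (f : T1 -> T1) (g : T2 -> T2)
  (z : T1 + T2) : T1 + T2 :=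
  match z with inl x => inl (f x) | inr y => inr (g y) end.

Definition join1 (T1 T2 : finType) (f1 : T1 -> T1) (g1 : T2 -> T2)
  (x1 : T1) (x2 : T2) (z : T1 + T2) : T1 + T2 :=
  if z == inl x1 then inr x2
  else if z == inr x2 then inl x1
  else if z == inl (f1 x1) then inr (g1 x2)
  else if z == inr (g1 x2) then inl (f1 x1)
  else sum_map f1 g1 z.

From mathcomp Require Import all_boot all_algebra.
From mathcomp Require Import zify.
Set Implicit Arguments. Unset Strict Implicit. Unset Printing Implicit Defensive.

(* The join only changes the vertex involution s1: on the disjoint union of the flags it
   replaces the two s1-pairs {x1, s1 x1} and {x2, s1 x2} by {x1, x2} and {s1 x1, s1 x2}.
   Hyperedges are orbits of <s0, s2>, so those of the join are the hyperedges of H1 and H2,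
   a set A of them splits as A1 + A2, and the partial dual of the join along A is the join
   of the partial duals along A1 and A2.
   Rewiring an involution q in this way, on top of a symmetric relation R, changes the number
   of classes of R + q in a controlled way: R + q and its rewiring both arise from one relation
   by adding two edges among the four rewired flags, and every class of that relation contains
   an even number of these flags.  For a join, vertices, faces and components thus each drop by
   one, so the Euler genus is additive; rewiring s1 towards s2 one pair at a time shows that it
   is nonnegative.  With nonnegative exponents, z^(g1 + g2) = z^g1 z^g2 and the sum over A
   factors. *)

(** * Classes of a relation *)

Section Classes.
Variable T : finType.
Implicit Types (r : rel T) (A : {set T}).

Definition eqclass r x := [set y | connect r x y].

Definition add_edge r u v : rel T :=
  fun x y => [|| r x y, (x == u) && (y == v) | (x == v) && (y == u)].

Lemma fwd_closed_connect r A x y :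
  (forall a b, a \in A -> r a b -> b \in A) -> x \in A -> connect r x y -> y \in A.
Proof.
move=> clA + /connectP[p + ->]; elim: p x => //= z p IHp x xA /andP[/(clA _ _ xA)].
exact: IHp.
Qed.

Lemma eq_classes r r' : connect r =2 connect r' -> classes r = classes r'.
Proof.
move=> rr'; apply/setP=> X; apply/imsetP/imsetP => -[x _ ->]; exists x => //;
  by apply/setP=> y; rewrite !inE rr'.
Qed.

Lemma eq_ncls r r' : connect r =2 connect r' -> ncls r = ncls r'.
Proof. by move=> rr'; rewrite /ncls (eq_classes rr'). Qed.

Lemma class_closed r E x y : E \in classes r -> x \in E -> r x y -> y \in E.
Proof. by case/imsetP=> z _ ->; rewrite !inE => zx /connect1; apply: connect_trans. Qed.

Lemma class_neq0 r E : E \in classes r -> E != set0.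
Proof. by case/imsetP=> x _ ->; apply/set0Pn; exists x; rewrite inE connect0. Qed.

Lemma sum_card_classes r : connect_sym r -> \sum_(E in classes r) #|E| = #|T|.
Proof.
move=> sym; have -> : classes r = equivalence_partition (connect r) [set: T].
  apply/setP=> X; apply/imsetP/imsetP => -[x _ ->]; exists x => //;
    by apply/setP=> y; rewrite !inE.
rewrite -cardsT -(card_partition (equivalence_partitionP _)) //.
move=> x y z _ _ _; split=> [|xy]; first exact: connect0.
by rewrite (same_connect sym xy).
Qed.

Lemma even_card_inv_closed (s : T -> T) A : involutive s -> (forall x, s x != x) ->
  (forall x, x \in A -> s x \in A) -> ~~ odd #|A|.
Proof.
move=> sK sF; elim: {A}_.+1 {-2}A (ltnSn #|A|) => // n IHn A leAn clA.
have [->|[x xA]] := set_0Vmem A; first by rewrite cards0.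
rewrite (cardsD1 x) xA (cardsD1 (s x)) !inE sF clA //= negbK in leAn *.
apply: IHn => [|y]; first by rewrite -ltnS (leq_trans _ leAn).
rewrite !inE => /and3P[ysx yx yA]; rewrite clA // andbT.
by rewrite (can_eq sK) yx -[x in _ != x]sK (can_eq sK) ysx.
Qed.

Section AddEdge.
Variable r : rel T.
Hypothesis symr : symmetric r.
Let csym : connect_sym r := sym_connect_sym symr.

Lemma add_edge_sym u v : symmetric (add_edge r u v).
Proof.
move=> x y; rewrite /add_edge symr; congr (_ || _).
by rewrite orbC; congr (_ || _); rewrite andbC.
Qed.

Lemma connect_add_edge u v x y : connect (add_edge r u v) x y =
  [|| connect r x y, connect r x u && connect r v y | connect r x v && connect r u y].
Proof.
apply/idP/idP => [xy|].
  set P := [set z | [|| connect r x z, connect r x u && connect r v z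
                      | connect r x v && connect r u z]].
  suff: y \in P by rewrite inE.
  apply: fwd_closed_connect xy; last by rewrite inE connect0.
  move=> a b; rewrite !inE => Pa /or3P[rab | /andP[/eqP ea /eqP eb] | /andP[/eqP ea /eqP eb]];
    move: Pa; rewrite ?ea ?eb.
  - have ab := connect1 rab.
    by case/or3P=> [xa | /andP[-> va] | /andP[-> ua]];
      rewrite ?(connect_trans xa ab) ?(connect_trans va ab) ?(connect_trans ua ab) ?orbT.
  - by case/or3P=> [-> | /andP[-> _] | /andP[-> _]]; rewrite connect0 ?orbT.
  - by case/or3P=> [-> | /andP[-> _] | /andP[-> _]]; rewrite connect0 ?orbT.
have sub : subrel (connect r) (connect (add_edge r u v)).
  by apply: connect_sub => a b rab; rewrite connect1 // /add_edge rab.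
have uv : connect (add_edge r u v) u v by rewrite connect1 // /add_edge !eqxx orbT.
have vu : connect (add_edge r u v) v u by rewrite connect1 // /add_edge !eqxx !orbT.
case/or3P=> [/sub // | /andP[/sub xu /sub vy] | /andP[/sub xv /sub uy]].
  exact: connect_trans xu (connect_trans uv vy).
exact: connect_trans xv (connect_trans vu uy).
Qed.

Lemma eqclass_eq x y : connect r x y -> eqclass r x = eqclass r y.
Proof. by move=> xy; apply/setP=> z; rewrite !inE (same_connect csym xy). Qed.

Lemma connect_add_edge_connected u v :
  connect r u v -> connect (add_edge r u v) =2 connect r.
Proof.
move=> uv x y; rewrite connect_add_edge.
apply/idP/idP => [/or3P[// | /andP[xu vy] | /andP[xv uy]] | -> //].
  exact: connect_trans xu (connect_trans uv vy).
by apply: connect_trans xv (connect_trans _ uy); rewrite csym.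
Qed.

Section Disconnected.
Variables u v : T.
Hypothesis nuv : ~~ connect r u v.
Let U := eqclass r u :|: eqclass r v.

Lemma eqclass_add_edge x :
  eqclass (add_edge r u v) x = if x \in U then U else eqclass r x.
Proof.
apply/setP=> y; rewrite !inE connect_add_edge (csym x u) (csym x v).
have [ux | nux] := boolP (connect r u x).
  have vx : connect r v x = false.
    by apply: contraNF nuv => vx; rewrite (connect_trans ux) // csym.
  by rewrite vx /= !inE -(same_connect csym ux) orbF.
have [vx | nvx] := boolP (connect r v x).
  by rewrite /= !inE -(same_connect csym vx) orbC.
by rewrite /= !inE orbF.
Qed.

Lemma classes_add_edge :
  classes (add_edge r u v) = U |: (classes r :\ eqclass r u :\ eqclass r v).
Proof.
apply/setP=> X; apply/imsetP/setU1P => [[x _ ->] | [-> | ]].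
- rewrite -/(eqclass _ x) eqclass_add_edge; case: ifPn => xU; [by left | right].
  have xcl y : ~~ connect r y x -> eqclass r x != eqclass r y.
    by apply: contra => /eqP/setP/(_ x); rewrite !inE connect0 => <-.
  by move: xU; rewrite !inE => /norP[/xcl -> /xcl ->]; rewrite imset_f.
- by exists u; rewrite // -/(eqclass _ u) eqclass_add_edge !inE connect0.
rewrite !inE => /and3P[Xv Xu /imsetP[x _ eX]].
exists x; rewrite // -/(eqclass _ x) eqclass_add_edge.
case: ifPn => // /[!inE] /orP[] /eqclass_eq eq_cl.
  by rewrite eX -/(eqclass r x) -eq_cl eqxx in Xu.
by rewrite eX -/(eqclass r x) -eq_cl eqxx in Xv.
Qed.

Lemma ncls_add_edge_disconnected : (ncls (add_edge r u v)).+1 = ncls r.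
Proof.
have Un : U \notin classes r.
  apply: contra nuv => /imsetP[x _ eU].
  have: u \in U /\ v \in U by rewrite !inE !connect0 orbT.
  by rewrite eU !inE => -[xu xv]; rewrite (connect_trans _ xv) // csym.
have vu : eqclass r v != eqclass r u.
  by apply: contra nuv => /eqP/setP/(_ v); rewrite !inE connect0 => <-.
rewrite /ncls classes_add_edge cardsU1 (cardsD1 (eqclass r u) (classes r)).
by rewrite (cardsD1 (eqclass r v)) !inE (negbTE Un) vu !imset_f // !andbF.
Qed.

End Disconnected.

Lemma ncls_add_edge u v : ncls (add_edge r u v) + ~~ connect r u v = ncls r.
Proof.
have [uv | nuv] := boolP (connect r u v).
  by rewrite addn0; apply: eq_ncls; apply: connect_add_edge_connected.
by rewrite addn1; apply: ncls_add_edge_disconnected.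
Qed.

End AddEdge.
End Classes.

(** * Four marked points *)

Definition even_meets (T : finType) (K : rel T) (s : seq T) :=
  forall x, ~~ odd (count (connect K x) s).

Lemma even_meets_perm (T : finType) (K : rel T) (s s' : seq T) :
  perm_eq s s' -> even_meets K s -> even_meets K s'.
Proof. by move=> /permP ss' evK x; rewrite -ss'. Qed.

Section FourPoints.
Variables (T : finType) (K : rel T) (a b c d : T).
Hypotheses (symK : symmetric K) (evK : even_meets K [:: a; b; c; d]).
Let csym : connect_sym K := sym_connect_sym symK.

Lemma connect_compl_pair : connect K a b -> connect K c d.
Proof.
move=> ab; have ac_ad : connect K a c = connect K a d.
  by have := evK a; rewrite /= connect0 ab; case: (connect K a c); case: (connect K a d).
have [ac | nac] := boolP (connect K a c).
  have ad : connect K a d by rewrite -ac_ad.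
  by apply: connect_trans ad; rewrite csym.
have cb : connect K c b = false.
  by apply: contraNF nac => cb; rewrite csym (connect_trans cb) // csym.
by have := evK c; rewrite /= connect0 (csym c a) (negbTE nac) cb; case: (connect K c d).
Qed.

End FourPoints.

Section TwoEdges.
Variables (T : finType) (K : rel T) (a b c d : T).
Hypotheses (symK : symmetric K) (evK : even_meets K [:: a; b; c; d]).

Lemma connect_add_edge_even : connect (add_edge K a b) c d.
Proof.
have csym := sym_connect_sym symK.
have evK_acbd : even_meets K [:: a; c; b; d].
  by apply: even_meets_perm evK; rewrite perm_cons (permEl (perm_catCA [:: b] [:: c] [:: d])).
have evK_adbc : even_meets K [:: a; d; b; c].
  by apply: even_meets_perm evK; rewrite perm_cons (permEl (perm_catC [:: b; c] [:: d])).
rewrite connect_add_edge //; have := evK a; rewrite /= connect0.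
have [ab _ | nab] := boolP (connect K a b).
  by rewrite (connect_compl_pair symK evK ab).
have [ac _ | nac] := boolP (connect K a c).
  by rewrite (csym c a) ac (connect_compl_pair symK evK_acbd ac) orbT.
have [ad _ | //] := boolP (connect K a d).
by rewrite (csym c b) (connect_compl_pair symK evK_adbc ad) !orbT.
Qed.

Lemma ncls_add_edge2 : ncls (add_edge (add_edge K a b) c d) + ~~ connect K a b = ncls K.
Proof.
have := ncls_add_edge (add_edge_sym symK a b) c d.
by rewrite connect_add_edge_even addn0 => ->; apply: ncls_add_edge.
Qed.

End TwoEdges.

Lemma connect_defect_le (T : finType) (K K' : rel T) a b c d :
  subrel (connect K) (connect K') ->
  even_meets K [:: a; b; c; d] -> even_meets K' [:: a; b; c; d] -> connect K' a c ->
  ~~ connect K a c + 2 * ~~ connect K' a b <= ~~ connect K a b + 1.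
Proof.
move=> KK' evK evK' ac'.
have [ab' | nab'] := boolP (connect K' a b); first by case: (connect K a c); case: (connect K a b).
have nab : connect K a b = false by apply: contraNF nab' => /KK'.
have nad : connect K a d = false.
  by apply: contraTF (evK' a) => /KK' ad'; rewrite /= connect0 ac' ad' (negbTE nab').
have ac : connect K a c by have := evK a; rewrite /= connect0 nab nad; case: (connect K a c).
by rewrite ac nab.
Qed.

(** * Involutions and their rewiring *)

Lemma neqF (T : eqType) (x y : T) : x != y -> ((x == y) = false) * ((y == x) = false).
Proof. by move=> xy; split; apply/negbTE; rewrite // eq_sym. Qed.

Section Involutions.
Variable T : finType.
Implicit Types (s : T -> T) (R : rel T).

Definition edges s : rel T := fun x y => y == s x.
Definition relUf R s : rel T := fun x y => R x y || (y == s x).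

Lemma eq_relUf R R' s : R =2 R' -> relUf R s =2 relUf R' s.
Proof. by move=> RR' x y; rewrite /relUf RR'. Qed.

Lemma inv_eq s : involutive s -> forall x y, (s x == y) = (x == s y).
Proof. by move=> sK x y; rewrite -(can_eq sK) sK. Qed.

Lemma edges_sym s : involutive s -> symmetric (edges s).
Proof. by move=> sK x y; rewrite /edges eq_sym inv_eq. Qed.

Lemma rel2_sym s s' : involutive s -> involutive s' -> symmetric (rel2 s s').
Proof. by move=> sK s'K x y; rewrite /rel2 !(eq_sym y) (inv_eq sK) (inv_eq s'K). Qed.

Lemma rel2l s s' x : rel2 s s' x (s x). Proof. by rewrite /rel2 eqxx. Qed.
Lemma rel2r s s' x : rel2 s s' x (s' x). Proof. by rewrite /rel2 eqxx orbT. Qed.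

Lemma nverts_relUf s1 s2 : nverts s1 s2 = ncls (relUf (edges s2) s1).
Proof. by apply/eq_ncls/eq_connect => x y; rewrite /rel2 orbC. Qed.

Lemma nfaces_relUf s0 s1 : nfaces s0 s1 = ncls (relUf (edges s0) s1).
Proof. by []. Qed.

Lemma ncomps_relUf s0 s1 s2 : ncomps s0 s1 s2 = ncls (relUf (rel2 s0 s2) s1).
Proof.
apply/eq_ncls/eq_connect => x y; rewrite /rel3 /relUf /rel2.
by case: (y == s0 x); case: (y == s1 x); case: (y == s2 x).
Qed.

Lemma ncls_rel2_inv s : involutive s -> (forall x, s x != x) -> ncls (rel2 s s) * 2 = #|T|.
Proof.
move=> sK sF; rewrite -(sum_card_classes (sym_connect_sym (rel2_sym sK sK))).
rewrite /ncls -sum_nat_const; apply: eq_bigr => _ /imsetP[x _ ->].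
have -> : [set y | connect (rel2 s s) x y] = [set x; s x].
  apply/setP=> y; rewrite inE; apply/idP/set2P => [xy | [-> | ->]].
  - apply/set2P; apply: fwd_closed_connect xy; last by rewrite !inE eqxx.
    by move=> b c /set2P[-> | ->]; rewrite /rel2 orbb => /eqP->; rewrite !inE ?sK eqxx ?orbT.
  - exact: connect0.
  - exact/connect1/rel2l.
by rewrite cards2 eq_sym sF.
Qed.

Lemma sum_deg_inv s0 s2 : involutive s0 -> (forall x, s0 x != x) -> involutive s2 ->
  sum_deg s0 s2 * 2 = #|T|.
Proof.
move=> s0K s0F s2K; rewrite -(sum_card_classes (sym_connect_sym (rel2_sym s0K s2K))).
rewrite /sum_deg big_distrl /=; apply: eq_bigr => E EH.
rewrite divnK // dvdn2; apply: (even_card_inv_closed s0K s0F) => x xE.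
exact: class_closed EH xE (rel2l _ _ _).
Qed.

Definition rewire s (u w : T) : T -> T := fun z =>
  if z == u then w else if z == w then u else if z == s u then s w
  else if z == s w then s u else s z.

Section Rewire.
Variables (q : T -> T) (u w : T).
Hypotheses (qK : involutive q) (qF : forall x, q x != x).
Hypotheses (wu : w != u) (wqu : w != q u).

Let qw_u : q w != u. Proof. by rewrite inv_eq. Qed.
Let qu_qw : q u != q w. Proof. by rewrite (can_eq qK) eq_sym. Qed.
Let corner_neq := (neqF (qF u), neqF (qF w), neqF wu, neqF wqu, neqF qw_u, neqF qu_qw).

Lemma rewireK : involutive (rewire q u w).
Proof.
move=> x; rewrite /rewire.
have [->|xu] := eqVneq x u; first by rewrite !(eqxx, corner_neq).
have [->|xw] := eqVneq x w; first by rewrite !(eqxx, corner_neq).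
have [->|xqu] := eqVneq x (q u); first by rewrite !(eqxx, corner_neq).
have [->|xqw] := eqVneq x (q w); first by rewrite !(eqxx, corner_neq).
by rewrite !(inv_eq qK) !qK (negbTE xu) (negbTE xw) (negbTE xqu) (negbTE xqw).
Qed.

Lemma rewire_fpf x : rewire q u w x != x.
Proof.
rewrite /rewire.
have [->|_] := eqVneq x u; first by rewrite !(eqxx, corner_neq).
have [->|_] := eqVneq x w; first by rewrite !(eqxx, corner_neq).
have [->|_] := eqVneq x (q u); first by rewrite !(eqxx, corner_neq).
have [->|_] := eqVneq x (q w); first by rewrite !(eqxx, corner_neq).
exact: qF.
Qed.

Definition corners := [:: u; q u; w; q w].

Lemma uniq_corners : uniq corners.
Proof. by rewrite /= !inE !corner_neq. Qed.

Lemma mem_corners_inv x : (q x \in corners) = (x \in corners).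
Proof.
rewrite !inE !(inv_eq qK) !qK.
by case: (x == u); case: (x == q u); case: (x == w); case: (x == q w).
Qed.

(* Both [relUf R q] and [relUf R (rewire q u w)] are [cut R] plus two edges between
   corners. *)
Definition cut R : rel T := fun x y => R x y || (x \notin corners) && (y == q x).

Lemma cut_sym R : symmetric R -> symmetric (cut R).
Proof.
move=> symR x y; rewrite /cut symR; congr (_ || _).
by apply/andP/andP => -[xc /eqP ->]; rewrite mem_corners_inv qK.
Qed.

Lemma pair_edge a x y :
  (x == a) && (y == q a) || (x == q a) && (y == a) = (x \in [:: a; q a]) && (y == q x).
Proof.
rewrite !inE; have [-> | _] := eqVneq x a; first by rewrite (neqF (qF a)).2 /= orbF.
by have [-> | _] := eqVneq x (q a); rewrite ?qK.
Qed.

Lemma relUf_cut R : relUf R q =2 add_edge (add_edge (cut R) u (q u)) w (q w).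
Proof.
move=> x y; rewrite /relUf /add_edge /cut !pair_edge !inE.
by case: (R x y); case: (y == q x); case: (x == u); case: (x == q u); case: (x == w);
  case: (x == q w).
Qed.

Lemma relUf_rewire_cut R :
  relUf R (rewire q u w) =2 add_edge (add_edge (cut R) u w) (q u) (q w).
Proof.
move=> x y; rewrite /relUf /add_edge /cut /rewire !inE.
have [-> | _] := eqVneq x u; first by rewrite ?(eqxx, corner_neq) /= !orbF.
have [-> | _] := eqVneq x w; first by rewrite ?(eqxx, corner_neq) /= !orbF.
have [-> | _] := eqVneq x (q u); first by rewrite ?(eqxx, corner_neq) /= !orbF.
by have [-> | _] := eqVneq x (q w); rewrite /= !orbF.
Qed.

Section Counting.
Variables (R : rel T) (p : T -> T).
Hypotheses (symR : symmetric R) (pK : involutive p) (pF : forall x, p x != x).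
Hypothesis Rp : forall x, R x (p x).

(* A class of [cut R] is closed under [p] and its part outside the corners under [q],
   so both have even size. *)
Lemma even_meets_cut : even_meets (cut R) corners.
Proof.
move=> x; set W := [set y | connect (cut R) x y].
have cutW y z : connect (cut R) x y -> cut R y z -> connect (cut R) x z.
  by move=> xy /connect1; apply: connect_trans.
have evW : ~~ odd #|W|.
  by apply: (even_card_inv_closed pK pF) => y; rewrite !inE => /cutW; apply; rewrite /cut Rp.
have evWc : ~~ odd #|W :\: [set y | y \in corners]|.
  apply: (even_card_inv_closed qK qF) => y; rewrite !(in_setD, in_set) mem_corners_inv.
  by case/andP=> yc xy; rewrite yc (cutW y) // /cut yc eqxx orbT.
have card_Wc : #|W :&: [set y | y \in corners]| = count (connect (cut R) x) corners.
  rewrite -size_filter -(card_uniqP (filter_uniq _ uniq_corners)).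
  by apply: eq_card => y; rewrite !(in_setI, in_set) mem_filter.
by rewrite -(cardsID [set y | y \in corners] W) oddD (negbTE evWc) addbF card_Wc in evW.
Qed.

Lemma ncls_relUf : ncls (relUf R q) + ~~ connect (cut R) u (q u) = ncls (cut R).
Proof.
rewrite (eq_ncls (eq_connect (relUf_cut R))).
exact: ncls_add_edge2 (cut_sym symR) even_meets_cut.
Qed.

Lemma ncls_relUf_rewire :
  ncls (relUf R (rewire q u w)) + ~~ connect (cut R) u w = ncls (cut R).
Proof.
rewrite (eq_ncls (eq_connect (relUf_rewire_cut R))).
apply: ncls_add_edge2 (cut_sym symR) (even_meets_perm _ even_meets_cut).
by rewrite perm_cons (permEl (perm_catCA [:: q u] [:: w] [:: q w])).
Qed.

End Counting.
End Rewire.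
End Involutions.

(** * The Euler inequality *)

Section Euler.
Variables (T : finType) (s0 s2 : T -> T).
Hypotheses (s0K : involutive s0) (s0F : forall x, s0 x != x).
Hypotheses (s2K : involutive s2) (s2F : forall x, s2 x != x).

Section Step.
Variables (s1 : T -> T) (a : T).
Hypotheses (s1K : involutive s1) (s1F : forall x, s1 x != x) (s12a : s1 a != s2 a).

Let s2a_a : s2 a != a. Proof. exact: s2F. Qed.
Let s2a_s1a : s2 a != s1 a. Proof. by rewrite eq_sym. Qed.
Local Notation K R := (cut s1 a (s2 a) R).

Lemma connect_cut_edges : ~~ connect (K (edges s2)) a (s1 a).
Proof.
have: s1 a \notin [set a; s2 a] by rewrite !inE negb_or s1F.
apply: contra => /fwd_closed_connect; apply; last by rewrite !inE eqxx.
move=> x y /set2P xA; have xc : x \in corners s1 a (s2 a).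
  by case: xA => ->; rewrite !inE eqxx ?orbT.
rewrite /cut xc orbF => /eqP->; apply/set2P.
by case: xA => ->; [right | left; rewrite s2K].
Qed.

Lemma euler_defect_rewire :
  let s1' := rewire s1 a (s2 a) in
  nverts s1 s2 + nfaces s0 s1 + 2 * ncomps s0 s1' s2
  <= nverts s1' s2 + nfaces s0 s1' + 2 * ncomps s0 s1 s2.
Proof.
rewrite /= !nverts_relUf !nfaces_relUf !ncomps_relUf.
have symv := edges_sym s2K; have symf := edges_sym s0K; have symc := rel2_sym s0K s2K.
have Rv : forall x, edges s2 x (s2 x) by move=> x; apply: eqxx.
have Rf : forall x, edges s0 x (s0 x) by move=> x; apply: eqxx.
have v := ncls_relUf s1K s1F s2a_a s2a_s1a symv s2K s2F Rv.
have v' := ncls_relUf_rewire s1K s1F s2a_a s2a_s1a symv s2K s2F Rv.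
have f := ncls_relUf s1K s1F s2a_a s2a_s1a symf s0K s0F Rf.
have f' := ncls_relUf_rewire s1K s1F s2a_a s2a_s1a symf s0K s0F Rf.
have c := ncls_relUf s1K s1F s2a_a s2a_s1a symc s0K s0F (rel2l s0 s2).
have c' := ncls_relUf_rewire s1K s1F s2a_a s2a_s1a symc s0K s0F (rel2l s0 s2).
have Kv_a : connect (K (edges s2)) a (s2 a) by apply/connect1; rewrite /cut /edges eqxx.
have Kc_a : connect (K (rel2 s0 s2)) a (s2 a) by apply/connect1; rewrite /cut rel2r.
have Kfc : subrel (connect (K (edges s0))) (connect (K (rel2 s0 s2))).
  apply: connect_sub => x y Kxy; apply: connect1; move: Kxy.
  by rewrite /cut /rel2 /edges => /orP[-> | ->]; rewrite ?orbT.
have := connect_defect_le Kfc (even_meets_cut s1K s1F s2a_a s2a_s1a s0K s0F Rf)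
  (even_meets_cut s1K s1F s2a_a s2a_s1a s0K s0F (rel2l s0 s2)) Kc_a.
rewrite (negbTE connect_cut_edges) Kv_a Kc_a /= in v v' c' *.
lia.
Qed.

Lemma card_disagree_rewire :
  #|[set x | rewire s1 a (s2 a) x != s2 x]| < #|[set x | s1 x != s2 x]|.
Proof.
rewrite (cardsD1 a [set x | s1 x != s2 x]) inE s12a add1n ltnS.
apply/subset_leq_card/subsetP => x; rewrite !inE /rewire.
have [-> | _] := eqVneq x a; first by rewrite eqxx.
have [-> | _] := eqVneq x (s2 a); first by rewrite s2K eqxx.
have [-> | _] := eqVneq x (s1 a); first by move=> _; rewrite s1K -(inv_eq s2K) s2a_s1a.
have [-> | _] := eqVneq x (s1 (s2 a)); last by move->.
by move=> _; rewrite s1K (can_eq s2K) -(inv_eq s1K) s12a.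
Qed.

End Step.

Lemma euler_ineq s1 : involutive s1 -> (forall x, s1 x != x) ->
  nverts s1 s2 + nhedges s0 s2 + nfaces s0 s1 <= 2 * ncomps s0 s1 s2 + sum_deg s0 s2.
Proof.
have [n] := ubnP #|[set x | s1 x != s2 x]|.
elim: n s1 => // n IHn s1 lt_n s1K s1F.
have [a /= s12a | agree] := pickP [pred x | s1 x != s2 x].
  have s2a_a := s2F a; have s2a_s1a : s2 a != s1 a by rewrite eq_sym.
  have := IHn _ (leq_trans (card_disagree_rewire s1K s12a) lt_n).
  move/(_ (rewireK s1K s1F s2a_a s2a_s1a) (rewire_fpf s1K s1F s2a_a)).
  have := euler_defect_rewire s1K s1F s12a.
  lia.
have e12 x : s1 x = s2 x by apply/eqP/negbFE/agree.
have -> : nverts s1 s2 = ncls (rel2 s2 s2).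
  by apply/eq_ncls/eq_connect => x y; rewrite /rel2 e12.
have -> : nfaces s0 s1 = nhedges s0 s2.
  by apply/eq_ncls/eq_connect => x y; rewrite /rel2 e12.
have -> : ncomps s0 s1 s2 = nhedges s0 s2.
  by apply/eq_ncls/eq_connect => x y; rewrite /rel3 /rel2 e12 orbb.
have := ncls_rel2_inv s2K s2F; have := sum_deg_inv s0K s0F s2K.
lia.
Qed.

Lemma euler_genus_ge0 s1 : involutive s1 -> (forall x, s1 x != x) ->
  (0 <= euler_genus s0 s1 s2)%R.
Proof. by move=> s1K s1F; have := euler_ineq s1K s1F; rewrite /euler_genus /euler_char; lia. Qed.

End Euler.

(** * Disjoint unions and joins *)

Definition sumrel (T1 T2 : finType) (r1 : rel T1) (r2 : rel T2) : rel (T1 + T2) :=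
  fun x y => match x, y with
  | inl a, inl b => r1 a b
  | inr a, inr b => r2 a b
  | _, _ => false
  end.

Definition liftl {T1 T2 : finType} (E : {set T1}) : {set T1 + T2} := inl @: E.
Definition liftr {T1 T2 : finType} (E : {set T2}) : {set T1 + T2} := inr @: E.

Lemma liftl_inj {T1 T2 : finType} : injective (@liftl T1 T2).
Proof. by apply: imset_inj => ? ? []. Qed.

Lemma liftr_inj {T1 T2 : finType} : injective (@liftr T1 T2).
Proof. by apply: imset_inj => ? ? []. Qed.

Section SumRel.
Variables (T1 T2 : finType) (r1 : rel T1) (r2 : rel T2).

Lemma connect_sumrel : connect (sumrel r1 r2) =2 sumrel (connect r1) (connect r2).
Proof.
move=> x y; apply/idP/idP => [xy | ].
  suff: y \in [set z | sumrel (connect r1) (connect r2) x z] by rewrite inE.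
  apply: fwd_closed_connect xy; last by rewrite inE; case: x => a; apply: connect0.
  move=> z z'; rewrite !inE.
  by case: x z z' => a [b|b] [c|c] //= ab bc; apply: connect_trans ab (connect1 bc).
case: x y => [a|a] [b|b] //= /connectP[p pth ->]; apply/connectP.
  by exists (map inl p); [apply: homo_path pth | rewrite last_map].
by exists (map inr p); [apply: homo_path pth | rewrite last_map].
Qed.

Lemma classes_sumrel :
  classes (sumrel r1 r2) = liftl @: classes r1 :|: liftr @: classes r2.
Proof.
have mem_liftl (E : {set T1}) z :
  (z \in liftl E) = if z is inl a then a \in E else false.
  by case: z => a; [rewrite mem_imset // => ? ? [] | apply/imsetP => -[]].
have mem_liftr (E : {set T2}) z :
  (z \in liftr E) = if z is inr a then a \in E else false.
  by case: z => a; [apply/imsetP => -[] | rewrite mem_imset // => ? ? []].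
apply/setP=> X; apply/imsetP/setUP => [[[a|a] _ ->] | ].
- left; apply/imsetP; exists (eqclass r1 a); first exact: imset_f.
  by apply/setP => -[b|b]; rewrite mem_liftl !inE connect_sumrel.
- right; apply/imsetP; exists (eqclass r2 a); first exact: imset_f.
  by apply/setP => -[b|b]; rewrite mem_liftr !inE connect_sumrel.
case=> /imsetP[E /imsetP[a _ ->] ->]; [exists (inl a) | exists (inr a)] => //;
  by apply/setP => -[b|b]; rewrite ?mem_liftl ?mem_liftr !inE connect_sumrel.
Qed.

Lemma ncls_sumrel : ncls (sumrel r1 r2) = ncls r1 + ncls r2.
Proof.
rewrite /ncls classes_sumrel cardsU (card_imset _ liftl_inj) (card_imset _ liftr_inj).
suff -> : liftl @: classes r1 :&: liftr @: classes r2 = set0 by rewrite cards0 subn0.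
apply/setP=> X; rewrite !inE; apply/andP => -[/imsetP[E EH ->] /imsetP[F _ /setP eEF]].
have /set0Pn[a aE] := class_neq0 EH.
have : inl a \in liftr F by rewrite -eEF imset_f.
by case/imsetP.
Qed.

End SumRel.

Section SumMap.
Variables (T1 T2 : finType).
Implicit Types (f : T1 -> T1) (g : T2 -> T2).

Lemma sum_map_inv f g : involutive f -> involutive g -> involutive (sum_map f g).
Proof. by move=> fK gK [a|a] /=; rewrite ?fK ?gK. Qed.

Lemma sum_map_fpf f g : (forall x, f x != x) -> (forall y, g y != y) ->
  forall z, sum_map f g z != z.
Proof. by move=> fF gF [a|a] /=; rewrite inj_eq //; move=> ? ? []. Qed.

Lemma sumrel_sym (R1 : rel T1) (R2 : rel T2) :
  symmetric R1 -> symmetric R2 -> symmetric (sumrel R1 R2).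
Proof. by move=> sym1 sym2 [a|a] [b|b] /=. Qed.

Lemma edges_sum_map f g : edges (sum_map f g) =2 sumrel (edges f) (edges g).
Proof. by move=> [a|a] [b|b] //=; rewrite /edges /= inj_eq //; move=> ? ? []. Qed.

Lemma rel2_sum_map f f' g g' :
  rel2 (sum_map f g) (sum_map f' g') =2 sumrel (rel2 f f') (rel2 g g').
Proof.
move=> x y; rewrite /rel2 -![_ == sum_map _ _ _]/(edges _ _ _) !edges_sum_map.
by case: x y => [a|a] [b|b].
Qed.

Lemma relUf_sumrel (R1 : rel T1) (R2 : rel T2) f g :
  relUf (sumrel R1 R2) (sum_map f g) =2 sumrel (relUf R1 f) (relUf R2 g).
Proof.
move=> x y; rewrite /relUf -[_ == sum_map _ _ _]/(edges _ _ _) edges_sum_map.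
by case: x y => [a|a] [b|b].
Qed.

End SumMap.

Section JoinCount.
Variables (T1 T2 : finType) (R1 : rel T1) (R2 : rel T2).
Variables (q1 p1 : T1 -> T1) (q2 p2 : T2 -> T2) (x1 : T1) (x2 : T2).
Hypotheses (symR1 : symmetric R1) (symR2 : symmetric R2).
Hypotheses (q1K : involutive q1) (q1F : forall x, q1 x != x).
Hypotheses (q2K : involutive q2) (q2F : forall y, q2 y != y).
Hypotheses (p1K : involutive p1) (p1F : forall x, p1 x != x).
Hypotheses (p2K : involutive p2) (p2F : forall y, p2 y != y).
Hypotheses (R1p : forall x, R1 x (p1 x)) (R2p : forall y, R2 y (p2 y)).

Lemma ncls_relUf_join :
  ncls (relUf (sumrel R1 R2) (rewire (sum_map q1 q2) (inl x1) (inr x2))) + 1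
  = ncls (relUf R1 q1) + ncls (relUf R2 q2).
Proof.
have qK := sum_map_inv q1K q2K; have qF := sum_map_fpf q1F q2F.
have pK := sum_map_inv p1K p2K; have pF := sum_map_fpf p1F p2F.
have symR := sumrel_sym symR1 symR2.
have Rp : forall z, sumrel R1 R2 z (sum_map p1 p2 z) by case.
have wu : inr x2 != inl x1 :> T1 + T2 by [].
have wqu : inr x2 != sum_map q1 q2 (inl x1) by [].
have := ncls_relUf qK qF wu wqu symR pK pF Rp.
have := ncls_relUf_rewire qK qF wu wqu symR pK pF Rp.
have := even_meets_cut qK qF wu wqu pK pF Rp (inl x1).
set K := cut _ _ _ _.
have KR : subrel (connect K) (connect (sumrel (relUf R1 q1) (relUf R2 q2))).
  apply: connect_sub => x y Kxy; apply: connect1; rewrite -relUf_sumrel /relUf.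
  by case/orP: Kxy => [-> | /andP[_ ->]]; rewrite ?orbT.
have Kinlr b : connect K (inl x1) (inr b) = false.
  by apply: contraFF (@KR _ _) _; rewrite connect_sumrel.
rewrite (eq_ncls (eq_connect (relUf_sumrel _ _ _ _))) ncls_sumrel /= connect0 !Kinlr.
by case: (connect K _ _) => //= _ <- <-; rewrite addn0.
Qed.

End JoinCount.

Section HypermapJoin.
Variables (T1 T2 : finType) (a0 a1 a2 : T1 -> T1) (b0 b1 b2 : T2 -> T2).
Variables (x1 : T1) (x2 : T2).
Hypotheses (a0K : involutive a0) (a1K : involutive a1) (a2K : involutive a2).
Hypotheses (a0F : forall x, a0 x != x) (a1F : forall x, a1 x != x).
Hypotheses (a2F : forall x, a2 x != x).
Hypotheses (b0K : involutive b0) (b1K : involutive b1) (b2K : involutive b2).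
Hypotheses (b0F : forall y, b0 y != y) (b1F : forall y, b1 y != y).
Hypotheses (b2F : forall y, b2 y != y).

Local Notation J := (join1 a1 b1 x1 x2).
Local Notation S0 := (sum_map a0 b0).
Local Notation S2 := (sum_map a2 b2).

Lemma join1E : J = rewire (sum_map a1 b1) (inl x1) (inr x2).
Proof. by []. Qed.

Lemma nverts_join : nverts J S2 + 1 = nverts a1 a2 + nverts b1 b2.
Proof.
rewrite !nverts_relUf (eq_ncls (eq_connect (eq_relUf _ (edges_sum_map a2 b2)))) join1E.
exact: ncls_relUf_join (edges_sym a2K) (edges_sym b2K) a1K a1F b1K b1F a2K a2F b2K b2F
  (fun=> eqxx _) (fun=> eqxx _).
Qed.

Lemma nfaces_join : nfaces S0 J + 1 = nfaces a0 a1 + nfaces b0 b1.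
Proof.
rewrite !nfaces_relUf (eq_ncls (eq_connect (eq_relUf _ (edges_sum_map a0 b0)))) join1E.
exact: ncls_relUf_join (edges_sym a0K) (edges_sym b0K) a1K a1F b1K b1F a0K a0F b0K b0F
  (fun=> eqxx _) (fun=> eqxx _).
Qed.

Lemma ncomps_join : ncomps S0 J S2 + 1 = ncomps a0 a1 a2 + ncomps b0 b1 b2.
Proof.
rewrite !ncomps_relUf (eq_ncls (eq_connect (eq_relUf _ (rel2_sum_map a0 a2 b0 b2)))) join1E.
exact: ncls_relUf_join (rel2_sym a0K a2K) (rel2_sym b0K b2K) a1K a1F b1K b1F a0K a0F b0K b0F
  (rel2l a0 a2) (rel2l b0 b2).
Qed.

Lemma nhedges_sum : nhedges S0 S2 = nhedges a0 a2 + nhedges b0 b2.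
Proof. by rewrite -ncls_sumrel; apply/eq_ncls/eq_connect/rel2_sum_map. Qed.

Lemma hedges_sum : hedges S0 S2 = liftl @: hedges a0 a2 :|: liftr @: hedges b0 b2.
Proof. by rewrite -classes_sumrel; apply/eq_classes/eq_connect/rel2_sum_map. Qed.

Lemma sum_deg_sum : sum_deg S0 S2 = sum_deg a0 a2 + sum_deg b0 b2.
Proof.
have := sum_deg_inv (sum_map_inv a0K b0K) (sum_map_fpf a0F b0F) (sum_map_inv a2K b2K).
have := sum_deg_inv a0K a0F a2K; have := sum_deg_inv b0K b0F b2K.
rewrite card_sum; lia.
Qed.

Lemma euler_genus_join :
  euler_genus S0 J S2 = (euler_genus a0 a1 a2 + euler_genus b0 b1 b2)%R.
Proof.
have := nverts_join; have := nfaces_join; have := ncomps_join.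
have := nhedges_sum; have := sum_deg_sum.
rewrite /euler_genus /euler_char; lia.
Qed.

End HypermapJoin.

(** * Partial duals *)

Section PartialDual.
Variable T : finType.

Lemma eq_euler_genus (s0 s1 s2 t0 t1 t2 : T -> T) :
  s0 =1 t0 -> s1 =1 t1 -> s2 =1 t2 -> euler_genus s0 s1 s2 = euler_genus t0 t1 t2.
Proof.
move=> e0 e1 e2.
have e (f g f' g' : T -> T) : f =1 f' -> g =1 g' -> connect (rel2 f g) =2 connect (rel2 f' g').
  by move=> ff' gg'; apply: eq_connect => x y; rewrite /rel2 ff' gg'.
have e3 : connect (rel3 s0 s1 s2) =2 connect (rel3 t0 t1 t2).
  by apply: eq_connect => x y; rewrite /rel3 e0 e1 e2.
rewrite /euler_genus /euler_char /sum_deg /hedges /nverts /nhedges /nfaces /ncomps.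
rewrite (eq_ncls (e _ _ _ _ e1 e2)) (eq_ncls (e _ _ _ _ e0 e1)) (eq_ncls e3).
by rewrite (eq_ncls (e _ _ _ _ e0 e2)) (eq_classes (e _ _ _ _ e0 e2)).
Qed.

Lemma pd_hypermap (s0 s1 s2 : T -> T) (S : {set T}) : is_hypermap s0 s1 s2 ->
  (forall x, x \in S -> s0 x \in S) -> (forall x, x \in S -> s2 x \in S) ->
  is_hypermap (pd0 S s0 s2) s1 (pd2 S s0 s2).
Proof.
case=> s0K [s1K [s2K [s0F [s1F s2F]]]] S0 S2.
have m0 x : (s0 x \in S) = (x \in S) by apply/idP/idP => [/S0 | /S0 //]; rewrite s0K.
have m2 x : (s2 x \in S) = (x \in S) by apply/idP/idP => [/S2 | /S2 //]; rewrite s2K.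
rewrite /pd0 /pd2; split; [|split; [done|split; [|split; [|split; [done|]]]]] => x.
all: by case xS: (x \in S); rewrite ?m0 ?m2 ?xS ?s0K ?s2K.
Qed.

Lemma pdual_hypermap (s0 s1 s2 : T -> T) (A : {set {set T}}) :
  is_hypermap s0 s1 s2 -> A \subset hedges s0 s2 ->
  let S := \bigcup_(E in A) E in is_hypermap (pd0 S s0 s2) s1 (pd2 S s0 s2).
Proof.
move=> H sAH; have closed f : (forall x, rel2 s0 s2 x (f x)) ->
    forall x, x \in \bigcup_(E in A) E -> f x \in \bigcup_(E in A) E.
  move=> Rf x /bigcupP[E EA xE]; apply/bigcupP; exists E => //.
  exact: class_closed (subsetP sAH _ EA) xE (Rf x).
exact: pd_hypermap H (closed _ (rel2l s0 s2)) (closed _ (rel2r s0 s2)).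
Qed.

Lemma pdual_genus_ge0 (s0 s1 s2 : T -> T) (A : {set {set T}}) :
  is_hypermap s0 s1 s2 -> A \subset hedges s0 s2 -> (0 <= pdual_genus s0 s1 s2 A)%R.
Proof.
move=> H /(pdual_hypermap H) [d0K [s1K [d2K [d0F [s1F d2F]]]]].
exact: euler_genus_ge0.
Qed.

End PartialDual.

Section LiftPair.
Variables T1 T2 : finType.
Implicit Types (A : {set {set T1}} * {set {set T2}}).

Definition lift_pair A : {set {set T1 + T2}} := liftl @: A.1 :|: liftr @: A.2.

Lemma liftl_eq_liftr (E : {set T1}) (F : {set T2}) :
  (liftl E == liftr F) = (E == set0) && (F == set0).
Proof.
apply/eqP/andP => [/setP eEF | [/eqP-> /eqP->]]; last by rewrite /liftl /liftr !imset0.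
split; apply/eqP/setP => x; rewrite inE; apply/negbTE/negP => xS.
  have : inl x \in (liftl E : {set T1 + T2}) by apply: imset_f.
  by rewrite eEF => /imsetP[].
have : inr x \in (liftr F : {set T1 + T2}) by apply: imset_f.
by rewrite -eEF => /imsetP[].
Qed.

Lemma mem_liftl_pair A (E : {set T1}) :
  set0 \notin A.2 -> (liftl E \in lift_pair A) = (E \in A.1).
Proof.
move=> A2n0; rewrite inE (mem_imset _ _ liftl_inj) orbC; case: imsetP => //= -[F FA2 /eqP].
by rewrite liftl_eq_liftr => /andP[_ /eqP F0]; rewrite -F0 FA2 in A2n0.
Qed.

Lemma mem_liftr_pair A (F : {set T2}) :
  set0 \notin A.1 -> (liftr F \in lift_pair A) = (F \in A.2).
Proof.
move=> A1n0; rewrite inE (mem_imset _ _ liftr_inj); case: imsetP => //= -[E EA1 /eqP].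
by rewrite eq_sym liftl_eq_liftr => /andP[/eqP E0 _]; rewrite -E0 EA1 in A1n0.
Qed.

Lemma powerset_lift_pair (H1 : {set {set T1}}) (H2 : {set {set T2}}) :
  set0 \notin H1 -> set0 \notin H2 ->
  powerset (lift_pair (H1, H2)) = lift_pair @: setX (powerset H1) (powerset H2).
Proof.
move=> H1n0 H2n0; apply/setP => X; rewrite inE; apply/idP/imsetP => [sXH | [[A1 A2]]].
  exists (liftl @^-1: X, liftr @^-1: X).
    rewrite in_setX !inE; apply/andP; split; apply/subsetP => E; rewrite inE => /(subsetP sXH).
      by rewrite mem_liftl_pair.
    by rewrite mem_liftr_pair.
  apply/setP => Y; rewrite inE; apply/idP/orP => [YX | [] /imsetP[E]]; last 2 first.
  - by rewrite inE => EX ->.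
  - by rewrite inE => EX ->.
  have := subsetP sXH _ YX; rewrite inE => /orP[] /imsetP[E _ eY]; [left | right];
    by rewrite eY imset_f // inE -eY.
rewrite in_setX !inE => /andP[sA1 sA2] ->.
by rewrite setUSS // imsetS.
Qed.

Lemma lift_pair_inj (H1 : {set {set T1}}) (H2 : {set {set T2}}) :
  set0 \notin H1 -> set0 \notin H2 ->
  {in setX (powerset H1) (powerset H2) &, injective lift_pair}.
Proof.
move=> H1n0 H2n0 [A1 A2] [B1 B2]; rewrite !in_setX !inE /=.
move=> /andP[sA1 sA2] /andP[sB1 sB2] eAB.
have nA1 : set0 \notin A1 by apply: contra H1n0; apply: (subsetP sA1).
have nA2 : set0 \notin A2 by apply: contra H2n0; apply: (subsetP sA2).
have nB1 : set0 \notin B1 by apply: contra H1n0; apply: (subsetP sB1).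
have nB2 : set0 \notin B2 by apply: contra H2n0; apply: (subsetP sB2).
congr pair; apply/setP => E.
  by rewrite -(@mem_liftl_pair (A1, A2)) // eAB mem_liftl_pair.
by rewrite -(@mem_liftr_pair (A1, A2)) // eAB mem_liftr_pair.
Qed.

Lemma mem_bigcup_lift_pair A z :
  (z \in \bigcup_(E in lift_pair A) E) =
  if z is inl x then x \in \bigcup_(E in A.1) E else
  if z is inr y then y \in \bigcup_(F in A.2) F else false.
Proof.
apply/bigcupP/idP => [[Y] | ].
  rewrite inE => /orP[] /imsetP[E EA ->] /imsetP[x xE ->] /=; apply/bigcupP; exists E => //.
case: z => x /bigcupP[E EA xE].
  by exists (liftl E); [rewrite inE imset_f | apply: imset_f].
by exists (liftr E); [rewrite inE imset_f ?orbT | apply: imset_f].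
Qed.

End LiftPair.

Lemma pdual_genus_join (T1 T2 : finType) (a0 a1 a2 : T1 -> T1) (b0 b1 b2 : T2 -> T2)
    (x1 : T1) (x2 : T2) (A1 : {set {set T1}}) (A2 : {set {set T2}}) :
  is_hypermap a0 a1 a2 -> is_hypermap b0 b1 b2 ->
  A1 \subset hedges a0 a2 -> A2 \subset hedges b0 b2 ->
  pdual_genus (sum_map a0 b0) (join1 a1 b1 x1 x2) (sum_map a2 b2) (lift_pair (A1, A2)) =
  (pdual_genus a0 a1 a2 A1 + pdual_genus b0 b1 b2 A2)%R.
Proof.
move=> H1 H2 /(pdual_hypermap H1) [c0K [c1K [c2K [c0F [c1F c2F]]]]].
move=> /(pdual_hypermap H2) [d0K [d1K [d2K [d0F [d1F d2F]]]]].
rewrite /pdual_genus -(euler_genus_join x1 x2) //.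
by apply: eq_euler_genus => // -[x|y]; rewrite /pd0 /pd2 /= mem_bigcup_lift_pair /=; case: ifP.
Qed.

Lemma abszD_ge0 (m n : int) : (0 <= m)%R -> (0 <= n)%R -> `|(m + n)%R|%N = `|m|%N + `|n|%N.
Proof. by case: m n => [m|m] [n|n]. Qed.

Unset Implicit Arguments.

Theorem mainTheorem5 (T1 T2 : finType)
  (f0 f1 f2 : T1 -> T1) (g0 g1 g2 : T2 -> T2) (x1 : T1) (x2 : T2) :
  is_hypermap f0 f1 f2 -> is_hypermap g0 g1 g2 ->
  connected_hm f0 f1 f2 -> connected_hm g0 g1 g2 ->
  pd_poly (sum_map f0 g0) (join1 f1 g1 x1 x2) (sum_map f2 g2)
  = (pd_poly f0 f1 f2 * pd_poly g0 g1 g2)%R.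
Proof.
move=> H1 H2 _ _.
have n1 : set0 \notin hedges f0 f2 by apply/negP => /class_neq0; rewrite eqxx.
have n2 : set0 \notin hedges g0 g2 by apply/negP => /class_neq0; rewrite eqxx.
rewrite /pd_poly hedges_sum -/(lift_pair (hedges f0 f2, hedges g0 g2)).
rewrite (powerset_lift_pair n1 n2) (big_imset _ (lift_pair_inj n1 n2)) /=.
rewrite big_distrlr pair_big /=; apply: eq_big => [[A1 A2] | [A1 A2]]; first by rewrite in_setX.
rewrite in_setX !inE => /andP[sA1 sA2].
by rewrite pdual_genus_join // -GRing.exprD abszD_ge0 // pdual_genus_ge0.
Qed.
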